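(* Let $W\in\mathcal W_0$, $w=\int_{[0,1]^2}W\,dxdy$ and $\ell(W)=W(1-W)$, and suppose $\int_{[0,1]^2}\ell(W)(x,y)\,dxdy\ne0$. For $\delta>0$ let $\xi=\xi(\delta)>0$ be the unique solution of $\int_{[0,1]^2}\frac{\xi W(x,y)}{1-W(x,y)+\xi W(x,y)}\,dxdy=w+\delta$, and set $W^\ast_\delta=\frac{W\xi}{1-W+W\xi}$. Then for sufficiently small $\delta>0$, $$W^\ast_\delta=W+\delta\,\frac{\ell(W)}{\int_{[0,1]^2}\ell(W)(x,y)\,dxdy}+O(\delta^2).$$
   Context: $\mathcal W_0$ is the set of symmetric measurable $W:[0,1]^2\to[0,1]$. $O(\delta^2)$ denotes a function on $[0,1]^2$ bounded in absolute value by $C\delta^2$ with $C$ independent of $\delta$ and $(x,y)$. *)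

From HB Require Import structures.
From mathcomp Require Import all_boot all_order all_algebra.
From mathcomp Require Import all_classical all_reals all_analysis.
Set Implicit Arguments. Unset Strict Implicit. Unset Printing Implicit Defensive.
Import Order.TTheory GRing.Theory Num.Theory.
Local Open Scope classical_set_scope.
Local Open Scope ring_scope.

Section defs.
Variable R : realType.

Definition usq : set (R * R) := `[0%R, 1%R] `*` `[0%R, 1%R].

Definition leb2 := (@lebesgue_measure R \x @lebesgue_measure R)%E.

Definition int2 (f : R * R -> R) : R := Rintegral leb2 usq f.

(* W is in W_0: symmetric measurable [0,1]^2 -> [0,1]
   (only the values on the unit square matter) *)
Definition in_W0 (W : R * R -> R) : Prop :=
  measurable_fun usq W /\
  (forall x y, x \in `[0%R, 1%R] -> y \in `[0%R, 1%R] ->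
     0 <= W (x, y) <= 1 /\ W (x, y) = W (y, x)).

Definition ell (W : R * R -> R) : R * R -> R := fun p => W p * (1 - W p).

Definition Wstar (W : R * R -> R) (xi : R) : R * R -> R :=
  fun p => xi * W p / (1 - W p + xi * W p).

End defs.

From Pilot Require Import Defs.
From HB Require Import structures.
From mathcomp Require Import all_boot all_order all_algebra.
From mathcomp Require Import all_classical all_reals all_analysis.
From mathcomp Require Import measurable_realfun ring lra.
Import Order.TTheory GRing.Theory Num.Theory numFieldNormedType.Exports.
Local Open Scope classical_set_scope.
Local Open Scope ring_scope.

(* Write [Wstar W xi = tilt xi \o W], where [tilt xi w = xi w / (1 - w + xi w)].
   Since [tilt xi w - w = (xi - 1) w (1 - w) / (1 - w + xi w)], for [xi >= 1]
   the linearisation [tilt xi w ~ w + (xi - 1) l(w)] is off by at most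
   [(xi - 1)^2] pointwise, hence also after integration over the unit square:
   with [L = int l(W)], the mass excess [F xi = int Wstar - int W] satisfies
   [|F xi - (xi - 1) L| <= (xi - 1)^2].  As [F <= 0] on [(0, 1]],
   [F xi >= (xi - 1) L / xi] and [F] is 1-Lipschitz on [[1, oo)], the equation
   [F xi = delta] has a solution in [[1, 2]] and every solution satisfies
   [xi - 1 <= 2 delta / L] when [delta <= L / 2].  Thus [delta = (xi - 1) L +
   O(delta^2)], and substituting this into the pointwise estimate gives the
   expansion with the constant [4 / L^2 + 4 / L^3]. *)

Lemma dist_max_le {R : realDomainType} (c a b : R) :
  `|Num.max c a - Num.max c b| <= `|a - b|.
Proof.
wlog ab : a b / a <= b.
  move=> hw; case: (leP a b) => [/hw//|/ltW/hw].
  by rewrite distrC [X in _ <= X]distrC.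
rewrite distrC [X in _ <= X]distrC [X in _ <= X]ger0_norm ?subr_ge0 //.
have [ca|/ltW ac] := leP c a; have [cb|/ltW bc] := leP c b.
all: rewrite ?(max_r ca) ?(max_l ac) ?(max_r cb) ?(max_l bc) ger0_norm; lra.
Qed.

Section tilt.
Context {R : realFieldType}.
Implicit Types a b xi w : R.

(* [tilt xi] multiplies the odds [w / (1 - w)] by [xi]. *)
Definition tilt xi w := xi * w / (1 - w + xi * w).

Lemma tilt_den_gt0 [xi w] : 0 < xi -> 0 <= w <= 1 -> 0 < 1 - w + xi * w.
Proof. by move=> xi0 /andP[w0 w1]; nra. Qed.

Lemma tilt1 w : tilt 1 w = w.
Proof. by rewrite /tilt !mul1r subrK divr1. Qed.

Lemma tiltB [xi w] : 0 < xi -> 0 <= w <= 1 ->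
  tilt xi w - w = (xi - 1) * (w * (1 - w)) / (1 - w + xi * w).
Proof. by move=> xi0 /(tilt_den_gt0 xi0) den0; rewrite /tilt; field; lra. Qed.

Lemma tilt_norm_le1 [xi w] : 0 < xi -> 0 <= w <= 1 -> `|tilt xi w| <= 1.
Proof.
move=> xi0 w01; have den0 := tilt_den_gt0 xi0 w01; case/andP: w01 => w0 w1.
rewrite /tilt ger0_norm; last by apply: divr_ge0; nra.
by rewrite ler_pdivrMr //; nra.
Qed.

Lemma tilt_le [xi w] : 0 < xi <= 1 -> 0 <= w <= 1 -> tilt xi w <= w.
Proof.
move=> /andP[xi0 xi1] w01; rewrite -subr_le0 tiltB //.
have den0 := tilt_den_gt0 xi0 w01; case/andP: w01 => w0 w1.
have ell0 : 0 <= w * (1 - w) by nra.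
by rewrite pmulr_lle0 ?invr_gt0 //; nra.
Qed.

Lemma tiltB_ge [xi w] : 1 <= xi -> 0 <= w <= 1 ->
  (xi - 1) / xi * (w * (1 - w)) <= tilt xi w - w.
Proof.
move=> xi1 w01; have xi0 : 0 < xi by lra.
have den0 := tilt_den_gt0 xi0 w01; rewrite tiltB //; case/andP: w01 => w0 w1.
have ell0 : 0 <= w * (1 - w) by nra.
rewrite mulrAC; apply: ler_wpM2l; first by nra.
by rewrite lef_pV2 ?posrE //; nra.
Qed.

Lemma tilt_taylor [xi w] : 1 <= xi -> 0 <= w <= 1 ->
  `|tilt xi w - w - (xi - 1) * (w * (1 - w))| <= (xi - 1) ^+ 2.
Proof.
move=> xi1 w01; have xi0 : 0 < xi by lra.
have den0 := tilt_den_gt0 xi0 w01.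
have -> : tilt xi w - w - (xi - 1) * (w * (1 - w)) =
    - ((xi - 1) ^+ 2 * (w * (1 - w) * w)) / (1 - w + xi * w).
  by rewrite tiltB //; field; lra.
have sq0 := sqr_ge0 (xi - 1); case/andP: w01 => w0 w1.
have /andP[cube0 cube1] : 0 <= w * (1 - w) * w <= 1 by apply/andP; split; nra.
have den1 : 1 <= 1 - w + xi * w by nra.
rewrite normrM normrN gtr0_norm ?invr_gt0 // ger0_norm; last exact: mulr_ge0.
by rewrite ler_pdivrMr //; nra.
Qed.

Lemma tilt_lipschitz [a b w] : 1 <= a -> 1 <= b -> 0 <= w <= 1 ->
  `|tilt a w - tilt b w| <= `|a - b|.
Proof.
move=> a1 b1 w01; have a0 : 0 < a by lra.
have b0 : 0 < b by lra.
have dena := tilt_den_gt0 a0 w01; have denb := tilt_den_gt0 b0 w01.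
have -> : tilt a w - tilt b w =
    (a - b) * (w * (1 - w) / ((1 - w + a * w) * (1 - w + b * w))).
  by rewrite /tilt; field; lra.
rewrite normrM ler_piMr //; case/andP: w01 => w0 w1.
have dena1 : 1 <= 1 - w + a * w by nra.
have denb1 : 1 <= 1 - w + b * w by nra.
have den1 := mulr_ege1 dena1 denb1.
rewrite ger0_norm; last by apply: divr_ge0; nra.
by rewrite ler_pdivrMr; nra.
Qed.

End tilt.

Section measurable_bounded.
Context {d} {T : measurableType d} {R : realType}.

Definition mbounded (D : set T) (f : T -> R) :=
  measurable_fun D f /\ exists M, forall x, D x -> `|f x| <= M.

Context {D : set T}.
Implicit Types f g : T -> R.

Lemma mbounded_cst c : mbounded D (fun=> c).
Proof. by split; [exact: measurable_cst | exists `|c|]. Qed.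

Lemma mboundedD f g :
  mbounded D f -> mbounded D g -> mbounded D (fun x => f x + g x).
Proof.
move=> [mf [M fM]] [mg [N gN]]; split; first exact: measurable_funD.
exists (M + N) => x Dx; apply: le_trans (ler_normD _ _) _.
by apply: lerD; [exact: fM | exact: gN].
Qed.

Lemma mboundedN f : mbounded D f -> mbounded D (fun x => - f x).
Proof.
move=> [mf [M fM]]; split; first exact: measurable_funN.
by exists M => x Dx; rewrite normrN; exact: fM.
Qed.

Lemma mboundedB f g :
  mbounded D f -> mbounded D g -> mbounded D (fun x => f x - g x).
Proof. by move=> bf bg; apply: mboundedD => //; exact: mboundedN. Qed.

Lemma mboundedM f g :
  mbounded D f -> mbounded D g -> mbounded D (fun x => f x * g x).
Proof.
move=> [mf [M fM]] [mg [N gN]]; split; first exact: measurable_funM.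
exists (M * N) => x Dx; rewrite normrM.
by apply: ler_pM => //; [exact: fM | exact: gN].
Qed.

Lemma mboundedZ c f : mbounded D f -> mbounded D (fun x => c * f x).
Proof. exact/mboundedM/mbounded_cst. Qed.

Lemma measurable_funV_gt0 f : measurable_fun D f ->
  (forall x, D x -> 0 < f x) -> measurable_fun D (fun x => (f x)^-1).
Proof.
move=> mf f_gt0.
apply: (@measurable_comp _ _ _ _ _ _ (`]0%R, +oo[%classic : set R)) => //.
- by move=> _ [x Dx <-]; rewrite /= in_itv /= andbT f_gt0.
apply: open_continuous_measurable_fun; first exact: interval_open.
move=> y; rewrite inE /= in_itv /= andbT => y0.
by apply: inv_continuous; rewrite gt_eqF.
Qed.

Lemma mbounded_integrable (mu : measure T R) f : measurable D ->
  (mu D < +oo)%E -> mbounded D f -> mu.-integrable D (EFin \o f).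
Proof.
move=> mD muD [mf [M fM]]; apply: measurable_bounded_integrable => //.
exists M; split; first exact: num_real.
by move=> N MN x Dx; apply: le_trans (fM x Dx) (ltW MN).
Qed.

End measurable_bounded.

Section int2.
Context {R : realType}.
Implicit Types (f g : R * R -> R) (c : R).
Local Notation usq := (@usq R).
Local Notation mbounded := (@mbounded _ _ R usq).

Lemma measurable_usq : measurable usq.
Proof. by apply: measurableX; exact: measurable_itv. Qed.

Lemma leb2_usq : leb2 usq = 1%:E.
Proof.
have leb01 : lebesgue_measure (`[0%R, 1%R] : set R) = 1%:E.
  by rewrite lebesgue_measure_itv /= lte_fin ltr01 -EFinB subr0.
rewrite /leb2 /Defs.usq product_measure1E; try exact: measurable_itv.
by rewrite [X in (X * _)%E]leb01 [X in (_ * X)%E]leb01 mule1.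
Qed.

Lemma mbounded_integrable_usq f :
  mbounded f -> (@leb2 R).-integrable usq (EFin \o f).
Proof.
move=> bf; apply: mbounded_integrable.
- exact: measurable_usq.
- by move: (ltry (1 : R)); rewrite -leb2_usq.
- exact: bf.
Qed.

Lemma int2_le f g : mbounded f -> mbounded g ->
  (forall p, usq p -> f p <= g p) -> int2 f <= int2 g.
Proof.
move=> bf bg fg; rewrite /int2; apply: le_Rintegral.
- exact: measurable_usq.
- exact: mbounded_integrable_usq.
- exact: mbounded_integrable_usq.
- exact: fg.
Qed.

Lemma int2B f g : mbounded f -> mbounded g ->
  int2 (fun p => f p - g p) = int2 f - int2 g.
Proof.
move=> bf bg; rewrite /int2; apply: RintegralB; first exact: measurable_usq.
  exact: mbounded_integrable_usq.
exact: mbounded_integrable_usq.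
Qed.

Lemma int2Z c f : mbounded f -> int2 (fun p => c * f p) = c * int2 f.
Proof.
move=> bf; rewrite /int2; apply: RintegralZl; first exact: measurable_usq.
exact: mbounded_integrable_usq.
Qed.

Lemma int2_cst c : int2 (fun=> c) = c.
Proof.
rewrite /int2 Rintegral_cst; last exact: measurable_usq.
rewrite -[RHS]mulr1; congr (_ * _).
by rewrite -[1]/(fine 1%:E); congr fine; exact: leb2_usq.
Qed.

Lemma int2_norm_le f c : mbounded f ->
  (forall p, usq p -> `|f p| <= c) -> `|int2 f| <= c.
Proof.
move=> bf fc; rewrite ler_norml; apply/andP; split.
- rewrite -[- c]int2_cst; apply: int2_le => //; first exact: mbounded_cst.
  by move=> p /fc; rewrite ler_norml => /andP[].
- rewrite -[c]int2_cst; apply: int2_le => //; first exact: mbounded_cst.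
  by move=> p /fc; rewrite ler_norml => /andP[].
Qed.

End int2.

Section Wstar.
Context {R : realType} {W : R * R -> R}.
Hypothesis W_W0 : in_W0 W.
Local Notation usq := (@usq R).
Local Notation mbounded := (@mbounded _ _ R usq).
Local Notation L := (int2 (ell W)).

Lemma W_ge0_le1 [p] : usq p -> 0 <= W p <= 1.
Proof. by case: p => x y [x01 y01]; have [] := W_W0.2 x y x01 y01. Qed.

Lemma ell_ge0_le1 [p] : usq p -> 0 <= ell W p <= 1.
Proof.
by move=> /W_ge0_le1 /andP[W0 W1]; apply/andP; split; rewrite /ell; nra.
Qed.

Lemma mbounded_W : mbounded W.
Proof.
split; first exact: W_W0.1.
by exists 1 => p /W_ge0_le1 /andP[W0 W1]; rewrite ger0_norm.
Qed.

Lemma mbounded_ell : mbounded (ell W).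
Proof.
apply: mboundedM mbounded_W _; apply: mboundedB mbounded_W.
exact: mbounded_cst.
Qed.

Lemma mbounded_Wstar xi : 0 < xi -> mbounded (Wstar W xi).
Proof.
move=> xi0; split; last by exists 1 => p /W_ge0_le1; exact: tilt_norm_le1.
have [mxiW _] : mbounded (fun p => xi * W p) by exact: mboundedZ mbounded_W.
have [mden _] : mbounded (fun p => 1 - W p + xi * W p).
  apply: mboundedD; last exact: mboundedZ mbounded_W.
  by apply: mboundedB mbounded_W; exact: mbounded_cst.
apply: measurable_funM mxiW _.
by apply: measurable_funV_gt0 mden _ => p /W_ge0_le1; exact: tilt_den_gt0.
Qed.

Lemma int2_ell_ge0 : 0 <= L.
Proof.
rewrite -(int2_cst 0); apply: int2_le => [||p /ell_ge0_le1 /andP[] //].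
  exact: mbounded_cst.
exact: mbounded_ell.
Qed.

Lemma int2_Wstar1 : int2 (Wstar W 1) = int2 W.
Proof. by congr int2; apply: funext => p; exact: tilt1. Qed.

Lemma int2_WstarB xi : 0 < xi ->
  int2 (Wstar W xi) - int2 W = int2 (fun p => Wstar W xi p - W p).
Proof.
by move=> xi0; rewrite int2B //; [exact: mbounded_Wstar | exact: mbounded_W].
Qed.

Lemma int2_Wstar_le [xi] : 0 < xi <= 1 -> int2 (Wstar W xi) <= int2 W.
Proof.
move=> xi01; have xi0 : 0 < xi by case/andP: xi01.
apply: int2_le => [||p /W_ge0_le1]; last exact: tilt_le.
  exact: mbounded_Wstar.
exact: mbounded_W.
Qed.

Lemma int2_Wstar_ge [xi] : 1 <= xi ->
  (xi - 1) / xi * L <= int2 (Wstar W xi) - int2 W.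
Proof.
move=> xi1; have xi0 : 0 < xi by lra.
rewrite int2_WstarB // -int2Z; last exact: mbounded_ell.
apply: int2_le => [||p /W_ge0_le1]; first exact: mboundedZ mbounded_ell.
  by apply: mboundedB; [exact: mbounded_Wstar | exact: mbounded_W].
exact: tiltB_ge.
Qed.

Lemma int2_Wstar_lipschitz [a b] : 1 <= a -> 1 <= b ->
  `|int2 (Wstar W a) - int2 (Wstar W b)| <= `|a - b|.
Proof.
move=> a1 b1; have a0 : 0 < a by lra.
have b0 : 0 < b by lra.
rewrite -int2B; [|exact: mbounded_Wstar..].
apply: int2_norm_le => [|p /W_ge0_le1]; last exact: tilt_lipschitz.
by apply: mboundedB; exact: mbounded_Wstar.
Qed.

Lemma int2_Wstar_taylor [xi] : 1 <= xi ->
  `|int2 (Wstar W xi) - int2 W - (xi - 1) * L| <= (xi - 1) ^+ 2.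
Proof.
move=> xi1; have xi0 : 0 < xi by lra.
have bWstarB : mbounded (fun p => Wstar W xi p - W p).
  by apply: mboundedB; [exact: mbounded_Wstar | exact: mbounded_W].
rewrite int2_WstarB // -int2Z; last exact: mbounded_ell.
rewrite -int2B //; last exact: mboundedZ mbounded_ell.
apply: int2_norm_le => [|p /W_ge0_le1]; last exact: tilt_taylor.
by apply: mboundedB => //; exact: mboundedZ mbounded_ell.
Qed.

Lemma continuous_int2_Wstar_max1 :
  continuous (fun x : R => int2 (Wstar W (Num.max 1 x))).
Proof.
move=> x; apply/cvgrPdist_lt => e e0; exists e => //= y /= xye.
have max1 (z : R) : 1 <= Num.max 1 z by rewrite le_max lexx.
have := int2_Wstar_lipschitz (max1 x) (max1 y).
have := dist_max_le 1 x y.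
lra.
Qed.

Lemma exists_Wstar_solution [delta] : 0 < delta <= L / 2 ->
  exists2 xi, 1 <= xi & int2 (Wstar W xi) = int2 W + delta.
Proof.
move=> /andP[delta0 deltaL].
pose g x := int2 (Wstar W (Num.max 1 x)).
have le12 : 1 <= 2 :> R by lra.
have g1 : g 1 = int2 W by rewrite /g maxxx int2_Wstar1.
have g2 : int2 W + delta <= g 2.
  have := int2_Wstar_ge le12; rewrite /g (max_r le12).
  by rewrite (_ : 2 - 1 = 1 :> R) ?mul1r; lra.
have g_cont : {within `[1, 2], continuous g}.
  exact/continuous_subspaceT/continuous_int2_Wstar_max1.
have g12 : Num.min (g 1) (g 2) <= int2 W + delta <= Num.max (g 1) (g 2).
  by rewrite ge_min le_max g1 g2 orbT lerDl ltW.
have [xi] := IVT le12 g_cont g12; rewrite in_itv /= => /andP[xi1 _] gxi.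
by exists xi => //; rewrite -gxi /g (max_r xi1).
Qed.

Lemma Wstar_solution_ge1 [xi delta] : 0 < delta -> 0 < xi ->
  int2 (Wstar W xi) = int2 W + delta -> 1 <= xi.
Proof.
move=> delta0 xi0 Exi; rewrite leNgt; apply/negP => /ltW xi1.
have xi01 : 0 < xi <= 1 by rewrite xi0 xi1.
by have := int2_Wstar_le xi01; lra.
Qed.

Hypothesis L_gt0 : 0 < L.

Lemma Wstar_solution_le [xi delta] : delta <= L / 2 -> 1 <= xi ->
  int2 (Wstar W xi) = int2 W + delta -> xi - 1 <= 2 * delta / L.
Proof.
(* [(xi - 1) L <= delta xi] and [L - delta >= L / 2] *)
move=> deltaL xi1 Exi; have := int2_Wstar_ge xi1.
rewrite Exi addrAC subrr add0r mulrAC ler_pdivrMr; last lra.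
rewrite ler_pdivlMr //; have : 0 <= (xi - 1) by lra.
nra.
Qed.

Lemma Wstar_expansion [xi delta] : 0 < delta <= L / 2 -> 0 < xi ->
    int2 (Wstar W xi) = int2 W + delta ->
  forall p, usq p -> `|Wstar W xi p - W p - delta * (ell W p / L)| <=
    (4 / L ^+ 2 + 4 / L ^+ 3) * delta ^+ 2.
Proof.
move=> /andP[delta0 deltaL] xi0 Exi p up.
have xi1 := Wstar_solution_ge1 delta0 xi0 Exi.
have t_le := Wstar_solution_le deltaL xi1 Exi.
have int_taylor : `|(xi - 1) * L - delta| <= (xi - 1) ^+ 2.
  have := int2_Wstar_taylor xi1.
  by rewrite Exi (addrC (int2 W)) addrK -opprB normrN.
have pt_taylor := tilt_taylor xi1 (W_ge0_le1 up).
have /andP[ell0 ell1] := ell_ge0_le1 up.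
set t := xi - 1 in t_le int_taylor pt_taylor *.
have -> : Wstar W xi p - W p - delta * (ell W p / L) =
    (Wstar W xi p - W p - t * ell W p) + ell W p / L * (t * L - delta).
  by field; rewrite gt_eqF.
have t0 : 0 <= t by rewrite subr_ge0.
have t2_le : t ^+ 2 <= (2 * delta / L) ^+ 2.
  by rewrite lerXn2r // nnegrE; exact: le_trans t_le.
have ellL : `|ell W p / L| <= 1 / L.
  rewrite ger0_norm ?divr_ge0 ?(ltW L_gt0) //.
  by apply: ler_wpM2r; rewrite // invr_ge0 ltW.
have -> : (4 / L ^+ 2 + 4 / L ^+ 3) * delta ^+ 2 =
    (2 * delta / L) ^+ 2 + 1 / L * (2 * delta / L) ^+ 2.
  by field; rewrite gt_eqF.
apply: le_trans (ler_normD _ _) (lerD (le_trans pt_taylor t2_le) _).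
rewrite normrM; apply: ler_pM => //.
exact: le_trans int_taylor t2_le.
Qed.

End Wstar.

Theorem lemma5p1 (R : realType) (W : R * R -> R) :
  in_W0 W ->
  int2 (ell W) != 0 ->
  exists delta0 : R, exists C : R, 0 < delta0 /\
    forall delta : R, 0 < delta < delta0 ->
      (exists xi : R, 0 < xi /\ int2 (Wstar W xi) = int2 W + delta) /\
      (forall xi : R, 0 < xi -> int2 (Wstar W xi) = int2 W + delta ->
         forall x y : R, x \in `[0, 1] -> y \in `[0, 1] ->
           `| Wstar W xi (x, y) - W (x, y)
              - delta * (ell W (x, y) / int2 (ell W)) | <= C * delta ^+ 2).
Proof.
move=> W_W0 L_neq0; set L := int2 (ell W).
have L_gt0 : 0 < L by rewrite lt0r L_neq0 int2_ell_ge0.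
exists (L / 2), (4 / L ^+ 2 + 4 / L ^+ 3); split; first exact: divr_gt0.
move=> delta /andP[delta0 /ltW deltaL].
have delta_small : 0 < delta <= L / 2 by rewrite delta0.
split.
- have [xi xi1 Exi] := exists_Wstar_solution W_W0 delta_small.
  by exists xi; split => //; lra.
- move=> xi xi0 Exi x y x01 y01.
  by apply: (Wstar_expansion W_W0 L_gt0 delta_small xi0 Exi (x, y)); split.
Qed.
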